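(* Let $I=(N,O,\succsim)$ be a general instance, $p$ a generalized random matching and $p'$ its associated random matching for the associated instance $I'$. Then $p$ is robust ex-post weakly stable if and only if $p'$ is robust ex-post weakly stable and $p$ is non-wasteful (i.e., $p'$ respects non-wastefulness).
   Context: General instance: $N=\{1,\dots,n\}$ agents, $O=\{o_1,\dots,o_m\}$ objects ($m,n\ge1$ arbitrary), $\emptyset$ the null object; each agent $i$ has a weak order $\succsim_i$ over $O\cup\{\emptyset\}$, each object $o$ a weak order $\succsim_o$ over $N\cup\{\emptyset\}$, with either $o\succ_i\emptyset$ or $\emptyset\succ_i o$, and either $i\succ_o\emptyset$ or $\emptyset\succ_o i$. $(i,o)$ is acceptable if $o\succ_i\emptyset$ and $i\succ_o\emptyset$. A generalized random matching is an $n\times m$ nonnegative matrix with row and column sums $\le1$; deterministic if entries are in $\{0,1\}$. $p$ is individually rational if $p(i,o)=0$ whenever $\emptyset\succ_i o$ or $\emptyset\succ_o i$; non-wasteful if there is no acceptable $(i,o)$ with $\sum_{o':o'\succsim_i o}p(i,o')<1$ and $\sum_j p(j,o)<1$. A generalized deterministic matching is weakly stable if it is individually rational and there is no acceptable $(i,o)$ with $\sum_{o':o'\succsim_i o}p(i,o')=0$ and $\sum_{j:j\succsim_o i}p(j,o)=0$. A decomposition of $p$ is $p=\sum_j\lambda_jP_j$ with $P_j$ generalized deterministic matchings, $\lambda_j\in(0,1]$, $\sum\lambda_j=1$. $p$ is robust ex-post weakly stable if it is non-wasteful and every decomposition of $p$ consists only of weakly stable generalized deterministic matchings. Associated instance: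 $D=\{d_1,\dots,d_m\}$, $\Phi=\{\phi_1,\dots,\phi_n\}$, $N'=N\cup D$, $O'=O\cup\Phi$, with weak orders (blocks best to worst, consecutive blocks strict): $i\in N$: objects acceptable to $i$ by $\succsim_i$, $\phi_i$, $\phi_k$ ($k\ne i$) in increasing index, objects unacceptable to $i$ by $\succsim_i$; $o_j$: agents acceptable to $o_j$ by $\succsim_{o_j}$, $d_j$, $d_k$ ($k\ne j$) in increasing index, agents unacceptable to $o_j$ by $\succsim_{o_j}$; $d_j$: $o_j$, other objects of $O$ in increasing index, then null objects with $\phi_k\succsim'_{d_j}\phi_l$ iff $k\succsim_{o_j}l$; $\phi_i$: $i$, other agents of $N$ in increasing index, then dummies with $d_k\succsim'_{\phi_i}d_l$ iff $o_k\succsim_i o_l$. Associated random matching: $p'(i,o_j)=p(i,o_j)$, $p'(d_j,\phi_i)=p(i,o_j)$, $p'(i,\phi_i)=1-\sum_o p(i,o)$, $p'(d_j,o_j)=1-\sum_i p(i,o_j)$, other entries $0$. For $I'$: a deterministic matching $q$ (bistochastic $\{0,1\}$-matrix) is weakly stable if there are no $a,b\in N'$, $c,c'\in O'$ with $q(a,c')=1$, $q(b,c)=1$, $c\succ'_a c'$, $a\succ'_c b$; a random matching (bistochastic matrix) is robust ex-post weakly stable if every representation of it as a convex combination with positive weights of deterministic matchings uses only weakly stable ones. *)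

From HB Require Import structures.
From mathcomp Require Import all_boot all_order all_algebra.
From mathcomp Require Import reals.
Set Implicit Arguments. Unset Strict Implicit. Unset Printing Implicit Defensive.
Import Order.TTheory GRing.Theory Num.Theory.
Local Open Scope ring_scope.

(* A weak preference relation  r x y  reads  "x is weakly preferred to y". *)
Definition weak_order (T : Type) (r : rel T) : Prop := total r /\ transitive r.
Definition sprefer (T : Type) (r : rel T) (x y : T) : bool := r x y && ~~ r y x.

(* General instance: agents N = 'I_n, objects O = 'I_m, the null object is None. *)
Section General.
Variables (n m : nat).
Variable prefA : 'I_n -> rel (option 'I_m).
Variable prefO : 'I_m -> rel (option 'I_n).

Definition general_instance : Prop :=
  [/\ (forall i, weak_order (prefA i)),
      (forall o, weak_order (prefO o)),
      (forall i o, sprefer (prefA i) (Some o) None || sprefer (prefA i) None (Some o))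
    & (forall o i, sprefer (prefO o) (Some i) None || sprefer (prefO o) None (Some i))].

Definition accA (i : 'I_n) (o : 'I_m) : bool := sprefer (prefA i) (Some o) None.
Definition accO (o : 'I_m) (i : 'I_n) : bool := sprefer (prefO o) (Some i) None.
Definition acceptable (i : 'I_n) (o : 'I_m) : bool := accA i o && accO o i.

Variable R : realType.

Definition gen_random_matching (p : 'I_n -> 'I_m -> R) : Prop :=
  [/\ (forall i o, 0 <= p i o),
      (forall i, \sum_o p i o <= 1)
    & (forall o, \sum_i p i o <= 1)].

Definition gen_deterministic (p : 'I_n -> 'I_m -> R) : Prop :=
  gen_random_matching p /\ (forall i o, p i o = 0 \/ p i o = 1).

Definition indiv_rational (p : 'I_n -> 'I_m -> R) : Prop :=
  forall i o, sprefer (prefA i) None (Some o) || sprefer (prefO o) None (Some i) ->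
    p i o = 0.

Definition non_wasteful (p : 'I_n -> 'I_m -> R) : Prop :=
  ~ exists i o, [/\ acceptable i o,
                    \sum_(o' | prefA i (Some o') (Some o)) p i o' < 1
                  & \sum_j p j o < 1].

Definition weakly_stable_gen (p : 'I_n -> 'I_m -> R) : Prop :=
  indiv_rational p /\
  ~ exists i o, [/\ acceptable i o,
                    \sum_(o' | prefA i (Some o') (Some o)) p i o' = 0
                  & \sum_(j | prefO o (Some j) (Some i)) p j o = 0].

Definition gen_decomposition (p : 'I_n -> 'I_m -> R) (k : nat)
    (lam : 'I_k -> R) (P : 'I_k -> 'I_n -> 'I_m -> R) : Prop :=
  [/\ (forall j, gen_deterministic (P j)),
      (forall j, 0 < lam j <= 1),
      \sum_j lam j = 1
    & (forall i o, p i o = \sum_j lam j * P j i o)].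

Definition robust_gen (p : 'I_n -> 'I_m -> R) : Prop :=
  non_wasteful p /\
  forall (k : nat) (lam : 'I_k -> R) (P : 'I_k -> 'I_n -> 'I_m -> R),
    gen_decomposition p lam P -> forall j, weakly_stable_gen (P j).

(* Associated instance: N' = N ∪ D  as  'I_n + 'I_m  (inl i = i, inr j = d_j),
   O' = O ∪ Φ  as  'I_m + 'I_n  (inl j = o_j, inr i = φ_i). *)

(* position of x in the order "a first, then the others by increasing index" *)
Definition keyI (N : nat) (a x : 'I_N) : nat := if x == a then 0%N else (x : nat).+1.

Definition prefA' (a : 'I_n + 'I_m) (x y : 'I_m + 'I_n) : bool :=
  match a, x, y with
  | inl i, inl o, inl o' =>
      if accA i o == accA i o' then prefA i (Some o) (Some o') else accA i o
  | inl i, inl o, inr _ => accA i o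
  | inl i, inr _, inl o => ~~ accA i o
  | inl i, inr k, inr l => (keyI i k <= keyI i l)%N
  | inr j, inl o, inl o' => (keyI j o <= keyI j o')%N
  | inr _, inl _, inr _ => true
  | inr _, inr _, inl _ => false
  | inr j, inr k, inr l => prefO j (Some k) (Some l)
  end.

Definition prefO' (c : 'I_m + 'I_n) (x y : 'I_n + 'I_m) : bool :=
  match c, x, y with
  | inl j, inl i, inl i' =>
      if accO j i == accO j i' then prefO j (Some i) (Some i') else accO j i
  | inl j, inl i, inr _ => accO j i
  | inl j, inr _, inl i => ~~ accO j i
  | inl j, inr k, inr l => (keyI j k <= keyI j l)%N
  | inr i, inl a, inl a' => (keyI i a <= keyI i a')%N
  | inr _, inl _, inr _ => true
  | inr _, inr _, inl _ => false
  | inr i, inr k, inr l => prefA i (Some k) (Some l)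
  end.

Definition assoc_matching (p : 'I_n -> 'I_m -> R)
    (a : 'I_n + 'I_m) (c : 'I_m + 'I_n) : R :=
  match a, c with
  | inl i, inl o => p i o
  | inr j, inr i => p i j
  | inl i, inr i' => if i' == i then 1 - \sum_o p i o else 0
  | inr j, inl j' => if j' == j then 1 - \sum_i p i j else 0
  end.

End General.

Section Standard.
Variables (A B : finType) (R : realType).
Variables (pA : A -> rel B) (pB : B -> rel A).

Definition bistochastic (q : A -> B -> R) : Prop :=
  [/\ (forall a b, 0 <= q a b),
      (forall a, \sum_b q a b = 1)
    & (forall b, \sum_a q a b = 1)].

Definition deterministic (q : A -> B -> R) : Prop :=
  bistochastic q /\ (forall a b, q a b = 0 \/ q a b = 1).

Definition weakly_stable (q : A -> B -> R) : Prop :=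
  ~ exists (a b : A) (c c' : B),
      [/\ q a c' = 1, q b c = 1, sprefer (pA a) c c' & sprefer (pB c) a b].

Definition robust_ws (q : A -> B -> R) : Prop :=
  bistochastic q /\
  forall (k : nat) (lam : 'I_k -> R) (Q : 'I_k -> A -> B -> R),
    (forall j, 0 < lam j) -> \sum_j lam j = 1 ->
    (forall j, deterministic (Q j)) ->
    (forall a b, q a b = \sum_j lam j * Q j a b) ->
    forall j, weakly_stable (Q j).

End Standard.

From HB Require Import structures.
From mathcomp Require Import all_boot all_order all_algebra.
From mathcomp Require Import reals.
From mathcomp Require Import lra.
Import Order.TTheory GRing.Theory Num.Theory.
Local Open Scope ring_scope.

(* The map p |-> p' is affine and sends generalized deterministic matchings to
   deterministic ones, so every decomposition of p lifts to one of p'.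
   Conversely, a deterministic matching Q occurring in a decomposition of p'
   vanishes wherever p' does; hence its N x O block and its transposed D x Phi
   block are generalized deterministic matchings, and each of these two
   families decomposes p.  Weak stability transfers in both directions: a
   violation of individual rationality or a blocking pair of P gives a
   blocking pair of P' (through the partners phi_i and d_o), while a blocking
   pair of Q lies inside one of the two blocks, because no agent i strictly
   prefers any phi_k to its partner and no object o any d_j. *)

Section StrictPreference.
Context {T : Type} {r : rel T}.

Lemma sprefer_trans {x y z} :
  transitive r -> sprefer r x y -> sprefer r y z -> sprefer r x z.
Proof.
move=> tr /andP[xy nyx] /andP[yz nzy]; rewrite /sprefer (tr _ _ _ xy yz).
by apply: contra nyx => /(tr _ _ _ yz).
Qed.

Lemma sprefer_asym {x y} : sprefer r x y -> ~~ sprefer r y x.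
Proof. by case/andP=> xy _; rewrite /sprefer xy andbF. Qed.

Lemma sprefer_totalE x y : total r -> sprefer r x y = ~~ r y x.
Proof. by move=> tot; rewrite /sprefer; case/orP: (tot x y) => ->; rewrite ?andbF. Qed.

End StrictPreference.

Lemma sum01_le1 {R : numDomainType} {I : finType} {F : I -> R} :
  (forall i, F i = 0 \/ F i = 1) -> \sum_i F i <= 1 -> \sum_i F i = 0 \/ \sum_i F i = 1.
Proof.
move=> F01 le1; have F0 i : 0 <= F i by case: (F01 i) => ->.
case: (pickP (fun i => F i == 1)) => [i /eqP Fi1 | no1]; [right | left].
  by apply/le_anti; rewrite le1 -{1}Fi1 (bigD1 i) //= lerDl sumr_ge0.
by apply: big1 => i _; case: (F01 i) => // Fi1; move: (no1 i); rewrite Fi1 eqxx.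
Qed.

Lemma psum_mul_eq0 {R : numDomainType} {I : finType} {lam F : I -> R} :
  (forall l, 0 < lam l) -> (forall l, 0 <= F l) ->
  \sum_l lam l * F l = 0 -> forall l, F l = 0.
Proof.
move=> lam0 F0 /(psumr_eq0P (fun l _ => mulr_ge0 (ltW (lam0 l)) (F0 l))) eq0 l.
by apply/eqP; move: (eq0 l isT) => /eqP; rewrite mulf_eq0 (gt_eqF (lam0 l)).
Qed.

Lemma convex_comb_1B {R : numDomainType} {I J : finType} (lam : I -> R) F (f : J -> R) :
  \sum_l lam l = 1 -> (forall x, f x = \sum_l lam l * F l x) ->
  1 - \sum_x f x = \sum_l lam l * (1 - \sum_x F l x).
Proof.
move=> lam1 hf; rewrite (eq_bigr _ (fun x _ => hf x)).
under [RHS]eq_bigr do rewrite mulrBr mulr1 mulr_sumr.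
by rewrite sumrB lam1 exchange_big.
Qed.

Section DeterministicMatching.
Context {R : realType} {A B : finType}.
Implicit Type q : A -> B -> R.

Lemma deterministic_tr {q} : deterministic q -> deterministic (fun b a => q a b).
Proof. by case=> [[q0 rows cols] q01]. Qed.

Lemma deterministic_row_eq0 {q a b b'} :
  deterministic q -> q a b = 1 -> b' != b -> q a b' = 0.
Proof.
case=> [[q0 rows _] _] qab b'b.
have : \sum_(c | c != b) q a c = 0.
  by have := rows a; rewrite (bigD1 b) //= qab; lra.
by move/psumr_eq0P; apply.
Qed.

Lemma deterministic_row_partner {q} a : deterministic q -> exists b, q a b = 1.
Proof.
case=> [[_ rows _] q01].
case: (pickP (fun b => q a b == 1)) => [b /eqP | no1]; first by exists b.
have : \sum_b q a b = 0.
  by apply: big1 => b _; case: (q01 a b) => // qab; move: (no1 b); rewrite qab eqxx.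
by rewrite rows => /eqP; rewrite oner_eq0.
Qed.

End DeterministicMatching.

Lemma deterministic_col_eq0 {R : realType} {A B : finType} {q : A -> B -> R} {a a' b} :
  deterministic q -> q a b = 1 -> a' != a -> q a' b = 0.
Proof. by move=> /deterministic_tr; exact: deterministic_row_eq0. Qed.

Lemma deterministic_col_partner {R : realType} {A B : finType} {q : A -> B -> R} b :
  deterministic q -> exists a, q a b = 1.
Proof. by move=> /deterministic_tr; exact: deterministic_row_partner. Qed.

Section AssociatedMatching.
Context {R : realType} {n m : nat}.
Implicit Types (p P : 'I_n -> 'I_m -> R) (Q : 'I_n + 'I_m -> 'I_m + 'I_n -> R).

Definition real_block Q : 'I_n -> 'I_m -> R := fun i o => Q (inl i) (inl o).

Definition dummy_block Q : 'I_n -> 'I_m -> R := fun i o => Q (inr o) (inr i).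

Lemma bistochastic_assoc p : gen_random_matching p -> bistochastic (assoc_matching p).
Proof.
case=> p0 rows cols; split.
- by case=> [i|j] [o|i'] /=; rewrite ?p0 //; case: eqP; rewrite ?subr_ge0.
- case=> [i|j]; rewrite big_sumType /= -big_mkcond big_pred1_eq; last exact: subrK.
  by rewrite addrC subrK.
- case=> [o|i]; rewrite big_sumType /= -big_mkcond (big_pred1 _ (fun _ => eq_sym _ _)).
    by rewrite addrC subrK.
  exact: subrK.
Qed.

Lemma deterministic_assoc {P} : gen_deterministic P -> deterministic (assoc_matching P).
Proof.
case=> hP P01; split; first exact: bistochastic_assoc.
case: hP => _ rows cols.
case=> [i|j] [o|i'] /=; rewrite ?P01 //; case: eqP => _; try by left.
  by case: (sum01_le1 (P01 i) (rows i)) => ->; [right | left]; rewrite ?subr0 ?subrr.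
by case: (sum01_le1 (P01^~ j) (cols j)) => ->; [right | left]; rewrite ?subr0 ?subrr.
Qed.

Lemma assoc_matching_conv p k (lam : 'I_k -> R) (P : 'I_k -> 'I_n -> 'I_m -> R) :
  \sum_l lam l = 1 -> (forall i o, p i o = \sum_l lam l * P l i o) ->
  forall a c, assoc_matching p a c = \sum_l lam l * assoc_matching (P l) a c.
Proof.
move=> lam1 hp [i|j] [o|i'] /=; [exact: hp | | | exact: hp]; case: eqP => _;
  by [apply: convex_comb_1B | rewrite big1 // => l _; rewrite mulr0].
Qed.

Lemma gen_deterministic_real_block Q : deterministic Q -> gen_deterministic (real_block Q).
Proof.
case=> [[Q0 rows cols] Q01]; split=> [|i o]; last exact: Q01.
split=> [i o | i | o]; first exact: Q0.
  by have := rows (inl i); rewrite big_sumType => <-; rewrite lerDl sumr_ge0.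
by have := cols (inl o); rewrite big_sumType => <-; rewrite lerDl sumr_ge0.
Qed.

Lemma gen_deterministic_dummy_block Q : deterministic Q -> gen_deterministic (dummy_block Q).
Proof.
case=> [[Q0 rows cols] Q01]; split=> [|i o]; last exact: Q01.
split=> [i o | i | o]; first exact: Q0.
  by have := cols (inr i); rewrite big_sumType => <-; rewrite lerDr sumr_ge0.
by have := rows (inr o); rewrite big_sumType => <-; rewrite lerDr sumr_ge0.
Qed.

End AssociatedMatching.

Section AssociatedInstance.
Context {R : realType} {n m : nat}.
Context {prefA : 'I_n -> rel (option 'I_m)} {prefO : 'I_m -> rel (option 'I_n)}.
Implicit Types (P : 'I_n -> 'I_m -> R) (Q : 'I_n + 'I_m -> 'I_m + 'I_n -> R).

Local Notation pA' := (prefA' prefA prefO).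

Lemma general_instance_swap :
  general_instance prefA prefO -> general_instance prefO prefA.
Proof. by case. Qed.

Lemma indiv_rational_tr P :
  indiv_rational prefA prefO P -> indiv_rational prefO prefA (fun o i => P i o).
Proof. by move=> ir o i h; apply: ir; rewrite orbC. Qed.

Hypothesis gi : general_instance prefA prefO.

Lemma indiv_rational_acceptable {P i o} :
  indiv_rational prefA prefO P -> P i o != 0 -> acceptable prefA prefO i o.
Proof.
case: gi => _ _ dA dO ir; apply: contraTT; rewrite negbK => nacc.
apply/eqP/ir; move: nacc; rewrite /acceptable /accA /accO.
by case/orP: (dA i o) => ->; case/orP: (dO o i) => ->; rewrite ?orbT.
Qed.

Lemma sprefer_real_agentE {Q i o c} :
  deterministic Q -> indiv_rational prefA prefO (real_block Q) -> Q (inl i) c = 1 ->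
  sprefer (pA' (inl i)) (inl o) c =
    accA prefA i o && (\sum_(o' | prefA i (Some o') (Some o)) real_block Q i o' == 0).
Proof.
move=> hQ ir Qic; case: c Qic => [o'' | k] Qic; last first.
  rewrite /sprefer /= negbK andbb big1 ?eqxx ?andbT // => o' _; rewrite /real_block.
  by apply: (deterministic_row_eq0 hQ Qic).
have /andP[acc'' _] : acceptable prefA prefO i o''.
  by apply: (indiv_rational_acceptable ir); rewrite /real_block Qic oner_eq0.
rewrite /sprefer /= acc''; case: (accA prefA i o) => //=.
rewrite -/(sprefer _ _ _) sprefer_totalE; last by case: gi => /(_ i) [].
apply/idP/idP => [npref | ].
  apply/eqP/big1 => o' pref; apply: (deterministic_row_eq0 hQ Qic).
  by apply: (contraNneq _ npref) => -[<-].
have Q0 : forall a c, 0 <= Q a c by case: hQ => [[]].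
apply: contraTN => pref; apply/eqP => /(psumr_eq0P (fun o' _ => Q0 _ _)) /(_ o'' pref).
by rewrite /real_block Qic => /eqP; rewrite oner_eq0.
Qed.

Lemma no_phi_above_partner {Q i c} k :
  indiv_rational prefA prefO (real_block Q) ->
  (forall k', Q (inl i) (inr k') = 1 -> k' = i) ->
  Q (inl i) c = 1 -> ~~ sprefer (pA' (inl i)) (inr k) c.
Proof.
move=> ir phi_partner; case: c => [o | k'] Qic.
  have /andP[acc _] : acceptable prefA prefO i o.
    by apply: (indiv_rational_acceptable ir); rewrite /real_block Qic oner_eq0.
  by rewrite /sprefer /= acc.
by rewrite (phi_partner _ Qic) /sprefer /= [keyI i i]/keyI eqxx leq0n andbF.
Qed.

End AssociatedInstance.

Section Stability.
Context {R : realType} {n m : nat}.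
Context {prefA : 'I_n -> rel (option 'I_m)} {prefO : 'I_m -> rel (option 'I_n)}.
Implicit Types (p P : 'I_n -> 'I_m -> R) (Q : 'I_n + 'I_m -> 'I_m + 'I_n -> R).
Hypothesis gi : general_instance prefA prefO.

Local Notation pA' := (prefA' prefA prefO).
Local Notation pO' := (prefO' prefA prefO).

Definition gen_blocking P i o : Prop :=
  [/\ acceptable prefA prefO i o,
      \sum_(o' | prefA i (Some o') (Some o)) P i o' = 0
    & \sum_(j | prefO o (Some j) (Some i)) P j o = 0].

(* prefO' prefA prefO is by definition prefA' prefO prefA: the object side of
   I' is the agent side of the mirrored instance, for the transposed matching. *)
Lemma sprefer_real_objectE {Q o i b} :
  deterministic Q -> indiv_rational prefA prefO (real_block Q) -> Q b (inl o) = 1 ->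
  sprefer (pO' (inl o)) (inl i) b =
    accO prefO o i && (\sum_(j | prefO o (Some j) (Some i)) real_block Q j o == 0).
Proof.
move=> hQ /indiv_rational_tr ir.
exact: (sprefer_real_agentE (general_instance_swap gi) (deterministic_tr hQ) ir).
Qed.

Lemma no_dummy_above_partner {Q o b} j :
  indiv_rational prefA prefO (real_block Q) ->
  (forall j', Q (inr j') (inl o) = 1 -> j' = o) ->
  Q b (inl o) = 1 -> ~~ sprefer (pO' (inl o)) (inr j) b.
Proof.
move=> /indiv_rational_tr ir.
exact: (no_phi_above_partner (Q := fun c a => Q a c) (general_instance_swap gi) j ir).
Qed.

Lemma dummy_block_blocking {Q i j j' k} :
  deterministic Q -> indiv_rational prefA prefO (dummy_block Q) ->
  Q (inr j) (inr i) = 1 -> Q (inr j') (inr k) = 1 ->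
  sprefer (prefO j) (Some k) (Some i) -> sprefer (prefA k) (Some j) (Some j') ->
  gen_blocking (dummy_block Q) k j.
Proof.
move=> hQ ir Qji Qj'k jki kjj'; case: gi => [wA wO _ _].
have /andP[_ accOji] : acceptable prefA prefO i j.
  by apply: (indiv_rational_acceptable gi ir); rewrite /dummy_block Qji oner_eq0.
have /andP[accAkj' _] : acceptable prefA prefO k j'.
  by apply: (indiv_rational_acceptable gi ir); rewrite /dummy_block Qj'k oner_eq0.
split.
- rewrite /acceptable /accA /accO (sprefer_trans (wA k).2 kjj' accAkj').
  by rewrite (sprefer_trans (wO j).2 jki accOji).
- apply: big1 => o' pref; apply: (deterministic_col_eq0 hQ Qj'k).
  by apply: (contraTneq _ pref) => -[->]; case/andP: kjj'.
- apply: big1 => x pref; apply: (deterministic_row_eq0 hQ Qji).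
  by apply: (contraTneq _ pref) => -[->]; case/andP: jki.
Qed.

Lemma weakly_stable_of_blocks {p Q} :
  deterministic Q -> (forall a c, assoc_matching p a c = 0 -> Q a c = 0) ->
  weakly_stable_gen prefA prefO (real_block Q) ->
  weakly_stable_gen prefA prefO (dummy_block Q) ->
  weakly_stable pA' pO' Q.
Proof.
move=> hQ supp [irR stR] [irD stD] [a [b [c [c' [Qac' Qbc sa sc]]]]].
have phi_partner i k : Q (inl i) (inr k) = 1 -> k = i.
  move=> Q1; apply/eqP; apply: contraT => ki.
  by rewrite -(oner_eq0 R) -Q1 supp //= (negbTE ki).
have dummy_partner o j : Q (inr j) (inl o) = 1 -> j = o.
  move=> Q1; apply/eqP; apply: contraT => jo.
  by rewrite -(oner_eq0 R) -Q1 supp //= eq_sym (negbTE jo).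
case: a c Qac' Qbc sa sc => [i|j] [o|k] Qac' Qbc sa sc.
- apply: stR; exists i, o.
  move: sa sc; rewrite (sprefer_real_agentE gi hQ irR Qac').
  rewrite (sprefer_real_objectE hQ irR Qbc) => /andP[accA_io /eqP sumA] /andP[accO_oi /eqP sumO].
  by split; rewrite // /acceptable accA_io.
- by rewrite (negbTE (no_phi_above_partner gi k irR (phi_partner i) Qac')) in sa.
- by rewrite (negbTE (no_dummy_above_partner j irR (dummy_partner o) Qbc)) in sc.
case: c' Qac' sa => [o'' _ sa | i Qji jki]; first by rewrite /sprefer /= in sa.
case: b Qbc sc => [i' _ sc | j' Qj'k kjj']; first by rewrite /sprefer /= in sc.
by apply: stD; exists k, j; exact: (dummy_block_blocking hQ irD Qji Qj'k).
Qed.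

Lemma weakly_stable_gen_of_assoc {P} :
  gen_deterministic P -> weakly_stable pA' pO' (assoc_matching P) ->
  weakly_stable_gen prefA prefO P.
Proof.
move=> hP stQ; have hQ := deterministic_assoc hP.
have ir : indiv_rational prefA prefO P.
  move=> i o unacc; case: (hP.2 i o) => // Pio; case: stQ.
  case/orP: unacc => /sprefer_asym /negbTE nacc.
    by exists (inl i), (inr o), (inr i), (inl o); rewrite /sprefer /= [accA _ _ _]nacc Pio.
  by exists (inr o), (inl i), (inl o), (inr i); rewrite /sprefer /= [accO _ _ _]nacc Pio.
split=> // -[i [o [/andP[accA_io accO_oi] sumA sumO]]]; apply: stQ.
have [c' Qic'] := deterministic_row_partner (inl i) hQ.
have [b Qbo] := deterministic_col_partner (inl o) hQ.
exists (inl i), b, (inl o), c'; split=> //.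
  by rewrite (sprefer_real_agentE gi hQ ir Qic') accA_io sumA eqxx.
by rewrite (sprefer_real_objectE hQ ir Qbo) accO_oi sumO eqxx.
Qed.

End Stability.

Section Robustness.
Context {R : realType} {n m : nat}.
Context {prefA : 'I_n -> rel (option 'I_m)} {prefO : 'I_m -> rel (option 'I_n)}.
Hypothesis gi : general_instance prefA prefO.
Variable p : 'I_n -> 'I_m -> R.

Local Notation pA' := (prefA' prefA prefO).
Local Notation pO' := (prefO' prefA prefO).

Lemma robust_ws_assoc :
  gen_random_matching p -> robust_gen prefA prefO p ->
  robust_ws pA' pO' (assoc_matching p).
Proof.
move=> hp [_ rob]; split=> [|k lam Q lam0 lam1 hQ hdec l]; first exact: bistochastic_assoc.
have Q0 l' a c : 0 <= Q l' a c by case: (hQ l') => [[]].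
have supp a c : assoc_matching p a c = 0 -> Q l a c = 0.
  by rewrite hdec => /(psum_mul_eq0 lam0 (fun l' => Q0 l' a c)); apply.
have lam_le1 l' : 0 < lam l' <= 1.
  by rewrite lam0 -lam1 (bigD1 l') //= lerDl sumr_ge0 // => l'' _; apply: ltW.
apply: (weakly_stable_of_blocks gi (hQ l) supp).
  apply: (rob k lam (fun l => real_block (Q l))).
  split=> // [l' | i o]; first exact: gen_deterministic_real_block.
  exact: (hdec (inl i) (inl o)).
apply: (rob k lam (fun l => dummy_block (Q l))).
split=> // [l' | i o]; first exact: gen_deterministic_dummy_block.
exact: (hdec (inr o) (inr i)).
Qed.

Lemma robust_gen_of_assoc :
  robust_ws pA' pO' (assoc_matching p) -> non_wasteful prefA prefO p ->
  robust_gen prefA prefO p.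
Proof.
move=> [_ rob] nw; split=> // k lam P [hP lam01 lam1 hdec] l.
apply: (weakly_stable_gen_of_assoc gi (hP l)).
apply: (rob k lam (fun l => assoc_matching (P l))) => // [l' | l' | a c].
- by case/andP: (lam01 l').
- exact: deterministic_assoc.
- exact: assoc_matching_conv.
Qed.

End Robustness.

Theorem proposition27 (R : realType) (n m : nat)
    (prefA : 'I_n -> rel (option 'I_m)) (prefO : 'I_m -> rel (option 'I_n))
    (p : 'I_n -> 'I_m -> R) :
  (0 < n)%N -> (0 < m)%N ->
  general_instance prefA prefO ->
  gen_random_matching p ->
  robust_gen prefA prefO p <->
  robust_ws (prefA' prefA prefO) (prefO' prefA prefO) (assoc_matching p)
  /\ non_wasteful prefA prefO p.
Proof.
move=> _ _ gi hp; split=> [rob | [rob nw]].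
  by split; [exact: robust_ws_assoc | case: rob].
exact: robust_gen_of_assoc.
Qed.
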